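(* Let $R,S$ be rings with identity and ring homomorphisms $\rho:R\to S$, $\iota:S\to R$ with $\rho\iota=\mathrm{id}_S$. Let $M\alpha L$ be a retractive pair and $n\ge 0$. If $M$ is of type $FP_n$ as a left $R$-module, then there exist retractive pairs $P_i\beta_iF_i$ ($0\le i\le n$), with each $P_i$ a finitely generated free left $R$-module and each $F_i$ a finitely generated free left $S$-module, and mappings of retractive pairs $(\partial_0,\delta_0):P_0\beta_0F_0\to M\alpha L$ and $(\partial_i,\delta_i):P_i\beta_iF_i\to P_{i-1}\beta_{i-1}F_{i-1}$ ($1\le i\le n$), such that $\mathrm{Im}(\partial_0,\delta_0)=M\alpha L$ and $\mathrm{Im}(\partial_{i+1},\delta_{i+1})=\mathrm{Ker}(\partial_i,\delta_i)$ for $0\le i<n$. In particular $0\leftarrow L\xleftarrow{\delta_0}F_0\xleftarrow{\delta_1}F_1\leftarrow\cdots\xleftarrow{\delta_n}F_n$ is a partial free resolution of $L$, so $L$ is of type $FP_n$ as a left $S$-module.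
   Context: A module is of type $FP_n$ if there is an exact sequence $0\leftarrow M\leftarrow P_0\leftarrow\cdots\leftarrow P_n$ with $P_0,\dots,P_n$ finitely generated free modules. A (left) retractive pair $M\alpha L$ consists of a left $R$-module $M$, a left $S$-module $L$, and abelian group homomorphisms $\alpha^+:M\to L$, $\alpha^-:L\to M$ with $\alpha^+\alpha^-=\mathrm{id}_L$, where $\alpha^+$ is an $R$-module homomorphism (with $L$ an $R$-module via $\rho$) and $\alpha^-$ is an $S$-module homomorphism (with $M$ an $S$-module via $\iota$). A mapping $(\phi,\psi):M\alpha L\to M'\beta L'$ consists of an $R$-module homomorphism $\phi:M\to M'$ and an $S$-module homomorphism $\psi:L\to L'$ with $\beta^+\phi=\psi\alpha^+$ and $\phi\alpha^-=\beta^-\psi$. Then $\alpha^\pm$ restrict to give the retractive pair $\mathrm{Ker}(\phi,\psi)$ consisting of $\mathrm{Ker}\phi$, $\mathrm{Ker}\psi$ with maps $\alpha^+,\alpha^-$, and $\beta^\pm$ restrict to give the retractive pair $\mathrm{Im}(\phi,\psi)$ consisting of $\mathrm{Im}\phi$, $\mathrm{Im}\psi$ with maps $\beta^+,\beta^-$. Equality of retractive pairs here means equality of both underlying modules (as subpairs). *)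

From HB Require Import structures.
From mathcomp Require Import all_boot all_order all_algebra.
Set Implicit Arguments. Unset Strict Implicit. Unset Printing Implicit Defensive.
Import GRing.Theory.
Local Open Scope ring_scope.

(* A finitely generated free left
   R-module is represented by 'rV[R]_k (= R^k with left scalar action). *)

Definition slin (A B : pzRingType) (sigma : A -> B)
    (U : lmodType A) (V : lmodType B) (f : U -> V) : Prop :=
  (forall x y, f (x + y) = f x + f y) /\ (forall a x, f (a *: x) = sigma a *: f x).

Definition lin (A : pzRingType) (U V : lmodType A) (f : U -> V) : Prop :=
  @slin A A id U V f.

Definition surj (X Y : Type) (f : X -> Y) : Prop := forall y, exists x, f x = y.

Definition exact_at (A : pzRingType) (U V W : lmodType A)
    (g : U -> V) (f : V -> W) : Prop :=
  forall v, f v = 0 <-> exists u, g u = v.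

(* M is of type FP_n: exact  0 <- M <- P_0 <- P_1 <- ... <- P_n, P_i = R^(k i),
   d0 : P_0 -> M, d i : P_(i+1) -> P_i  (i < n). *)
Definition FP (A : pzRingType) (n : nat) (M : lmodType A) : Prop :=
  exists (k : nat -> nat) (d0 : 'rV[A]_(k 0%N) -> M)
         (d : forall i, 'rV[A]_(k i.+1) -> 'rV[A]_(k i)),
    [/\ lin d0, forall i, (i < n)%N -> lin (d i), surj d0,
        (0 < n)%N -> exact_at (d 0%N) d0
      & forall i, (i.+1 < n)%N -> exact_at (d i.+1) (d i)].

(* retractive pair M alpha L : ap = alpha^+, am = alpha^- *)
Definition retractive (R S : pzRingType) (rho : R -> S) (iota : S -> R)
    (M : lmodType R) (L : lmodType S) (ap : M -> L) (am : L -> M) : Prop :=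
  [/\ slin rho ap, slin iota am & cancel am ap].

Definition rp_map (R S : pzRingType)
    (M : lmodType R) (L : lmodType S) (ap : M -> L) (am : L -> M)
    (M' : lmodType R) (L' : lmodType S) (bp : M' -> L') (bm : L' -> M')
    (phi : M -> M') (psi : L -> L') : Prop :=
  [/\ lin phi, lin psi, (forall m, bp (phi m) = psi (ap m))
    & (forall l, phi (am l) = bm (psi l))].

From HB Require Import structures.
From mathcomp Require Import all_boot all_order all_algebra.
Import GRing.Theory.
Local Open Scope ring_scope.

(* Choose generators m_1, ..., m_k of M.  The retractive pair P_0 = R^k + R^k,
   F_0 = S^k, with beta^+ = rho on the first summand and beta^- = (iota, 0),
   maps onto M alpha L: the first basis of P_0 goes to the alpha^- alpha^+ m_j
   (and the basis of F_0 to the alpha^+ m_j), the second to the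
   m_j - alpha^- alpha^+ m_j, which lie in the kernel of alpha^+.  The kernel of
   this mapping is again a retractive pair, and by a Schanuel-type argument the
   kernel of a surjection from a finitely generated free module onto an FP_(n+1)
   module is FP_n; induction on n gives the resolution, and forgetting its
   R-side gives the free resolution of L. *)

Set Implicit Arguments. Unset Strict Implicit. Unset Printing Implicit Defensive.

Section Semilinear.
Variables (A B : pzRingType) (sigma : A -> B) (U : lmodType A) (V : lmodType B).
Variables (f : U -> V) (f_slin : slin sigma f).

Lemma slin0 : f 0 = 0.
Proof. by apply: (addrI (f 0)); rewrite -f_slin.1 !addr0. Qed.

Lemma slinN x : f (- x) = - f x.
Proof. by apply: (addrI (f x)); rewrite -f_slin.1 !subrr slin0. Qed.

Lemma slinB x y : f (x - y) = f x - f y.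
Proof. by rewrite f_slin.1 slinN. Qed.

Lemma slin_sum I (r : seq I) (P : pred I) (F : I -> U) :
  f (\sum_(i <- r | P i) F i) = \sum_(i <- r | P i) f (F i).
Proof. by elim/big_rec2: _ => [|i x y _ <-]; rewrite ?slin0 ?f_slin.1. Qed.

End Semilinear.

Section LinearMaps.
Variable A : pzRingType.
Implicit Types U V W : lmodType A.

Lemma lin_id U : lin (@id U).
Proof. by []. Qed.

Lemma lin_comp U V W (f : V -> W) (g : U -> V) : lin f -> lin g -> lin (f \o g).
Proof. by move=> [fD fZ] [gD gZ]; split=> [x y|a x] /=; rewrite ?gD ?gZ ?fD ?fZ. Qed.

Lemma lin_add U V (f g : U -> V) : lin f -> lin g -> lin (fun x => f x + g x).
Proof.
move=> [fD fZ] [gD gZ]; split=> [x y|a x]; first by rewrite fD gD addrACA.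
by rewrite fZ gZ scalerDr.
Qed.

Lemma lin_sub U V (f g : U -> V) : lin f -> lin g -> lin (fun x => f x - g x).
Proof.
move=> f_lin [gD gZ]; apply: lin_add => //.
by split=> [x y|a x]; rewrite ?gD ?gZ ?opprD ?scalerN.
Qed.

Lemma lin_lsubmx m n : lin (@lsubmx A 1 m n).
Proof. by split=> [x y|a x]; rewrite ?linearD ?linearZ. Qed.

Lemma lin_rsubmx m n : lin (@rsubmx A 1 m n).
Proof. by split=> [x y|a x]; rewrite ?linearD ?linearZ. Qed.

Lemma lin_row_mx0 U m n (f : U -> 'rV[A]_m) :
  lin f -> lin (fun x => row_mx (f x) (0 : 'rV[A]_n)).
Proof.
move=> [fD fZ]; split=> [x y|a x];
  by rewrite ?fD ?fZ ?add_row_mx ?scale_row_mx ?addr0 ?scaler0.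
Qed.

Definition copair V m n (f : 'rV[A]_m -> V) (g : 'rV[A]_n -> V)
    (w : 'rV[A]_(m + n)) : V :=
  f (lsubmx w) + g (rsubmx w).

Lemma copair_row V m n (f : 'rV[A]_m -> V) (g : 'rV[A]_n -> V) x y :
  copair f g (row_mx x y) = f x + g y.
Proof. by rewrite /copair row_mxKl row_mxKr. Qed.

Lemma lin_copair V m n (f : 'rV[A]_m -> V) (g : 'rV[A]_n -> V) :
  lin f -> lin g -> lin (copair f g).
Proof.
by move=> f_lin g_lin; apply: lin_add; apply: lin_comp => //;
  [apply: lin_lsubmx | apply: lin_rsubmx].
Qed.

End LinearMaps.

Section Kernel.
Variables (A : pzRingType) (U V : lmodType A) (f : U -> V) (f_lin : lin f).

(* The unused proof argument makes [kerp f_lin], and hence the lmodule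
   instance on [kerT], depend on the linearity of [f]. *)
Definition kerp of lin f : {pred U} := fun x => f x == 0.

Fact kerp_submod_closed : submod_closed (kerp f_lin).
Proof.
split=> [|a x y]; rewrite !unfold_in /= ?(slin0 f_lin) //.
by rewrite f_lin.1 f_lin.2 => /eqP-> /eqP->; rewrite scaler0 addr0.
Qed.

HB.instance Definition _ := GRing.isSubmodClosed.Build A U (kerp f_lin) kerp_submod_closed.

Record kerT := KerT { kerval : U; _ : kerval \in kerp f_lin }.
HB.instance Definition _ := [isSub for kerval].
HB.instance Definition _ := [Choice of kerT by <:].
HB.instance Definition _ := [SubChoice_isSubLmodule of kerT by <:].

Lemma kervalP (x : kerT) : f (val x) = 0.
Proof. exact/eqP/(valP x). Qed.

Lemma lin_kerval : lin kerval.
Proof. by []. Qed.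

Lemma ker_mem x : f x = 0 -> x \in kerp f_lin.
Proof. by move/eqP. Qed.

Definition to_ker (W : Type) (g : W -> U) (gK : forall w, f (g w) = 0) (w : W) : kerT :=
  KerT (ker_mem (gK w)).

Lemma lin_to_ker (W : lmodType A) (g : W -> U) (gK : forall w, f (g w) = 0) :
  lin g -> lin (to_ker gK).
Proof. by move=> [gD gZ]; split=> [x y|a x]; apply: val_inj; rewrite /= ?gD ?gZ. Qed.

Lemma exact_at_val (W : lmodType A) (d : W -> kerT) :
  surj d <-> exact_at (fun w => val (d w)) f.
Proof.
split=> [d_surj v|d_ex x].
  split=> [/ker_mem vK|[w <-]]; last exact: kervalP.
  by have [w dw] := d_surj (KerT vK); exists w; rewrite dw.
by have [w dw] := (d_ex (val x)).1 (kervalP x); exists w; apply: val_inj.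
Qed.

Lemma kerval_eq0 (x : kerT) : val x = 0 <-> x = 0.
Proof. by split=> [x0|->] //; apply: val_inj. Qed.

Lemma exact_at_valr (W Z : lmodType A) (d' : Z -> W) (d : W -> kerT) :
  exact_at d' (fun w => val (d w)) <-> exact_at d' d.
Proof.
split=> ex w; first exact: iff_trans (iff_sym (kerval_eq0 _)) (ex w).
exact: iff_trans (kerval_eq0 _) (ex w).
Qed.

End Kernel.

Section FreeModules.
Variable A : pzRingType.

Definition comb (V : lmodType A) k (c : 'I_k -> V) (z : 'rV[A]_k) : V :=
  \sum_(j < k) z 0 j *: c j.

Lemma lin_comb (V : lmodType A) k (c : 'I_k -> V) : lin (comb c).
Proof.
split=> [x y|a x]; rewrite /comb.
  by rewrite -big_split; apply: eq_bigr => j _; rewrite mxE scalerDl.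
by rewrite scaler_sumr; apply: eq_bigr => j _; rewrite mxE scalerA.
Qed.

Lemma slin_comb (B : pzRingType) (sigma : A -> B) (U : lmodType A) (V : lmodType B)
    (f : U -> V) k (c : 'I_k -> U) z :
  slin sigma f -> f (comb c z) = \sum_(j < k) sigma (z 0 j) *: f (c j).
Proof.
by move=> f_slin; rewrite (slin_sum f_slin); apply: eq_bigr => j _; rewrite f_slin.2.
Qed.

Lemma lin_combE (V : lmodType A) k (f : 'rV[A]_k -> V) :
  lin f -> f =1 comb (fun j => f 'e_j).
Proof.
move=> f_lin z; rewrite {1}(row_sum_delta z) (slin_sum f_lin).
by apply: eq_bigr => j _; rewrite f_lin.2.
Qed.

Lemma rV_lift (U V : lmodType A) k (g : U -> V) (psi : 'rV[A]_k -> V) :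
  lin g -> surj g -> lin psi -> exists chi, lin chi /\ forall v, g (chi v) = psi v.
Proof.
move=> g_lin g_surj psi_lin.
have [c gc] := fin_all_exists (fun j : 'I_k => g_surj (psi 'e_j)).
exists (comb c); split=> [|v]; first exact: lin_comb.
by rewrite (slin_comb _ _ g_lin) (lin_combE psi_lin); apply: eq_bigr => j _; rewrite gc.
Qed.

End FreeModules.

Definition dcons (X : nat -> Type) (x0 : X 0%N) (x : forall i, X i.+1) i : X i :=
  if i is j.+1 then x j else x0.

Lemma FP_kerP (A : pzRingType) n (M : lmodType A) :
  FP n M <-> exists c (e : 'rV[A]_c -> M) (e_lin : lin e),
    surj e /\ ((0 < n)%N -> FP n.-1 (kerT e_lin)).
Proof.
split.
  move=> [k [d0 [d [d0_lin d_lin d0_surj ex0 exS]]]].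
  exists (k 0%N), d0, d0_lin; split=> // n_gt0.
  case: n n_gt0 d_lin ex0 exS => // n _ d_lin ex0 exS.
  have d0d w : d0 (d 0%N w) = 0 by apply/(ex0 isT); exists w.
  exists (fun i => k i.+1), (to_ker d0_lin d0d), (fun i => d i.+1); split.
  - exact/lin_to_ker/d_lin.
  - by move=> i lt_in; apply: d_lin.
  - by apply/exact_at_val; apply: ex0.
  - by move=> n_gt0; apply/exact_at_valr; apply: exS.
  - by move=> i lt_in; apply: exS.
move=> [c [e [e_lin [e_surj eK]]]].
case: n eK => [_|n /(_ isT) [k [d0 [d [d0_lin d_lin d0_surj ex0 exS]]]]].
  by exists (fun=> c), e, (fun _ _ => 0).
exists (dcons c k), e.
exists (@dcons (fun i => 'rV[A]_(dcons c k i.+1) -> 'rV[A]_(dcons c k i)) (val \o d0) d).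
split=> // [[|i] lt_in|_|[|i] lt_in] /=.
- exact: lin_comp (lin_kerval _) d0_lin.
- exact: d_lin.
- exact/exact_at_val.
- exact/exact_at_valr/ex0.
- exact: exS.
Qed.

Definition direct_sum_free (A : pzRingType) (K N : lmodType A) b
    (phi : K -> N) (sigma : 'rV[A]_b -> N) : Prop :=
  [/\ lin phi, lin sigma,
      forall x y, phi x + sigma y = 0 -> x = 0 /\ y = 0
    & forall v, exists x y, phi x + sigma y = v].

Section DirectSumFree.
Variables (A : pzRingType) (K N : lmodType A) (b c : nat).
Variables (phi : K -> N) (sigma : 'rV[A]_b -> N) (e : 'rV[A]_c -> K).
Hypotheses (phi_sigma : direct_sum_free phi sigma) (e_lin : lin e) (e_surj : surj e).

Definition direct_sum_cover := copair (phi \o e) sigma.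

Lemma lin_direct_sum_cover : lin direct_sum_cover.
Proof. by case: phi_sigma => phi_lin sigma_lin _ _; apply/lin_copair/sigma_lin/lin_comp. Qed.

Lemma direct_sum_cover_surj : surj direct_sum_cover.
Proof.
case: phi_sigma => _ _ _ phi_sigma_surj v.
have [x [y <-]] := phi_sigma_surj v; have [z <-] := e_surj x.
by exists (row_mx z y); rewrite /direct_sum_cover copair_row.
Qed.

Lemma direct_sum_cover_row (z : kerT e_lin) : direct_sum_cover (row_mx (val z) 0) = 0.
Proof.
case: phi_sigma => phi_lin sigma_lin _ _.
by rewrite /direct_sum_cover copair_row /= kervalP (slin0 phi_lin) (slin0 sigma_lin) addr0.
Qed.

(* With [b = 0], [direct_sum_free] says that [phi] is a linear isomorphism. *)
Lemma direct_sum_free_ker_cover :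
  direct_sum_free (to_ker lin_direct_sum_cover direct_sum_cover_row) (fun _ : 'rV[A]_0 => 0).
Proof.
case: phi_sigma => phi_lin sigma_lin phi_sigma_inj _; split.
- exact/lin_to_ker/lin_row_mx0/lin_kerval.
- by split=> [x y|a x]; rewrite ?addr0 ?scaler0.
- move=> x y; rewrite addr0 => /kerval_eq0 /= /eqP; rewrite row_mx_eq0 => /andP[/eqP x0 _].
  by split; [apply/kerval_eq0 | apply: thinmx0].
move=> v; have := kervalP v; rewrite /direct_sum_cover /copair.
move=> /phi_sigma_inj [/(ker_mem e_lin) lv0 rv0].
exists (KerT lv0), 0; apply: val_inj; rewrite addr0 /= -rv0; exact: hsubmxK.
Qed.

End DirectSumFree.

Lemma FP_direct_sum_free (A : pzRingType) n (K N : lmodType A) b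
    (phi : K -> N) (sigma : 'rV[A]_b -> N) :
  direct_sum_free phi sigma -> FP n K -> FP n N.
Proof.
elim: n K N b phi sigma => [|n IH] K N b phi sigma phi_sigma FPK;
  have [c [e [e_lin [e_surj eK]]]] := (FP_kerP _ _).1 FPK;
  apply/FP_kerP; exists (c + b)%N, _, (lin_direct_sum_cover phi_sigma e_lin);
  (split; first exact: direct_sum_cover_surj) => // _.
exact: IH (direct_sum_free_ker_cover _ _) (eK isT).
Qed.

(* Schanuel's trick: [schanuel_map] = [e | h] : R^c + R^a -> R^b is onto the
   free module R^b, hence split by [s]; projecting its kernel onto the
   R^a-coordinate gives a surjection onto [ker g] whose kernel is the direct sum
   of [ker e] (embedded as [row_mx _ 0]) and [s(R^b)]. *)
Section Schanuel.
Variables (A : pzRingType) (M : lmodType A) (a b c : nat).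
Variables (g : 'rV[A]_a -> M) (d0 : 'rV[A]_b -> M) (g_lin : lin g) (d0_lin : lin d0).
Variables (e : 'rV[A]_c -> kerT d0_lin) (h : 'rV[A]_a -> 'rV[A]_b).
Hypotheses (g_surj : surj g) (e_lin : lin e) (e_surj : surj e) (h_lin : lin h).
Hypothesis d0h : forall u, d0 (h u) = g u.

Definition schanuel_map := copair (fun z => val (e z)) h.

Lemma lin_schanuel_map : lin schanuel_map.
Proof. exact/lin_copair/h_lin/(lin_comp (lin_kerval _)). Qed.

Lemma schanuel_map_surj : surj schanuel_map.
Proof.
move=> x; have [u gu] := g_surj (d0 x).
have /(ker_mem d0_lin) xhuK : d0 (x - h u) = 0 by rewrite (slinB d0_lin) d0h gu subrr.
have [z ez] := e_surj (KerT xhuK).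
by exists (row_mx z u); rewrite /schanuel_map copair_row ez subrK.
Qed.

Variable s : 'rV[A]_b -> 'rV[A]_(c + a).
Hypotheses (s_lin : lin s) (schanuel_map_s : forall y, schanuel_map (s y) = y).

Lemma schanuel_map_proj w : schanuel_map (w - s (schanuel_map w)) = 0.
Proof. by rewrite (slinB lin_schanuel_map) schanuel_map_s subrr. Qed.

Lemma schanuel_proj_ker w : g (rsubmx (w - s (schanuel_map w))) = 0.
Proof.
have := congr1 d0 (schanuel_map_proj w).
by rewrite /schanuel_map /copair d0_lin.1 kervalP d0h add0r (slin0 d0_lin).
Qed.

Definition schanuel_proj := to_ker g_lin schanuel_proj_ker.

Lemma lin_schanuel_proj : lin schanuel_proj.
Proof.
apply/lin_to_ker/lin_comp; first exact: lin_rsubmx.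
exact/lin_sub/(lin_comp s_lin lin_schanuel_map).
Qed.

Lemma schanuel_proj_surj : surj schanuel_proj.
Proof.
move=> u; have /(ker_mem d0_lin) huK : d0 (h (val u)) = 0 by rewrite d0h kervalP.
have [z ez] := e_surj (KerT huK).
have w0 : schanuel_map (row_mx (- z) (val u)) = 0.
  by rewrite /schanuel_map copair_row (slinN e_lin) ez addNr.
by exists (row_mx (- z) (val u)); apply: val_inj; rewrite /= w0 (slin0 s_lin) subr0 row_mxKr.
Qed.

Lemma schanuel_proj_row (z : kerT e_lin) : schanuel_proj (row_mx (val z) 0) = 0.
Proof.
apply/kerval_eq0; rewrite /= /schanuel_map copair_row kervalP (slin0 h_lin) addr0.
by rewrite GRing.val0 (slin0 s_lin) subr0 row_mxKr.
Qed.

Lemma schanuel_proj_s y : schanuel_proj (s y) = 0.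
Proof. by apply/kerval_eq0; rewrite /= schanuel_map_s subrr linear0. Qed.

Lemma direct_sum_free_schanuel :
  direct_sum_free (to_ker lin_schanuel_proj schanuel_proj_row)
                  (to_ker lin_schanuel_proj schanuel_proj_s).
Proof.
split.
- exact/lin_to_ker/lin_row_mx0/lin_kerval.
- exact: lin_to_ker.
- move=> x y /kerval_eq0; rewrite /= => xy0.
  have y0 : y = 0.
    have := congr1 schanuel_map xy0; rewrite lin_schanuel_map.1 schanuel_map_s.
    rewrite (slin0 lin_schanuel_map) /schanuel_map copair_row kervalP (slin0 h_lin).
    by rewrite GRing.val0 !add0r.
  move: xy0; rewrite y0 (slin0 s_lin) addr0 => /eqP; rewrite row_mx_eq0 => /andP[/eqP x0 _].
  by split=> //; apply/kerval_eq0.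
move=> v; have := kervalP v; rewrite -/(schanuel_proj (val v)) => /kerval_eq0 /= w'0.
set w' := val v - s (schanuel_map (val v)) in w'0.
have /(ker_mem e_lin) z_ker : e (lsubmx w') = 0.
  apply/kerval_eq0; have := schanuel_map_proj (val v).
  by rewrite -/w' /schanuel_map /copair w'0 (slin0 h_lin) addr0.
exists (KerT z_ker), (schanuel_map (val v)); apply: val_inj; rewrite /= -w'0 hsubmxK.
exact: subrK.
Qed.

End Schanuel.

Lemma FP_ker_surj (A : pzRingType) n (M : lmodType A) a (g : 'rV[A]_a -> M)
    (g_lin : lin g) :
  surj g -> FP n.+1 M -> FP n (kerT g_lin).
Proof.
move=> g_surj /FP_kerP [b [d0 [d0_lin [d0_surj /(_ isT) FPK0]]]].
have [c [e [e_lin [e_surj eK]]]] := (FP_kerP _ _).1 FPK0.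
have [h [h_lin d0h]] := rV_lift d0_lin d0_surj g_lin.
have [s [s_lin s_right]] := rV_lift (lin_schanuel_map e_lin h_lin)
  (schanuel_map_surj g_surj e_surj d0h) (lin_id _).
apply/FP_kerP; exists (c + a)%N, _, (lin_schanuel_proj g_lin e_lin h_lin d0h s_lin s_right).
split=> [|n_gt0]; first exact: schanuel_proj_surj.
exact: FP_direct_sum_free (direct_sum_free_schanuel _ _ _ _ _ _) (eK n_gt0).
Qed.

Lemma rp_map_comp (R S : pzRingType)
    (M1 : lmodType R) (L1 : lmodType S) (ap1 : M1 -> L1) (am1 : L1 -> M1)
    (M2 : lmodType R) (L2 : lmodType S) (ap2 : M2 -> L2) (am2 : L2 -> M2)
    (M3 : lmodType R) (L3 : lmodType S) (ap3 : M3 -> L3) (am3 : L3 -> M3)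
    (phi : M1 -> M2) (psi : L1 -> L2) (phi' : M2 -> M3) (psi' : L2 -> L3) :
  rp_map ap1 am1 ap2 am2 phi psi -> rp_map ap2 am2 ap3 am3 phi' psi' ->
  rp_map ap1 am1 ap3 am3 (phi' \o phi) (psi' \o psi).
Proof.
move=> [phi_lin psi_lin phiP phiM] [phi'_lin psi'_lin phi'P phi'M].
by split=> [||x|y]; rewrite /= ?phi'P ?phiP ?phiM ?phi'M //; apply: lin_comp.
Qed.

Section KernelPair.
Variables (R S : pzRingType) (rho : R -> S) (iota : S -> R).
Variables (P : lmodType R) (F : lmodType S) (bp : P -> F) (bm : F -> P).
Variables (M : lmodType R) (L : lmodType S) (ap : M -> L) (am : L -> M).
Variables (phi : P -> M) (psi : F -> L) (phi_lin : lin phi) (psi_lin : lin psi).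
Hypotheses (bp_ret : retractive rho iota bp bm) (ap_ret : retractive rho iota ap am).
Hypothesis ap_phi : forall x, ap (phi x) = psi (bp x).
Hypothesis phi_bm : forall y, phi (bm y) = am (psi y).

Lemma ker_bp_mem (x : kerT phi_lin) : psi (bp (val x)) = 0.
Proof. by case: ap_ret => ap_slin _ _; rewrite -ap_phi kervalP (slin0 ap_slin). Qed.

Lemma ker_bm_mem (y : kerT psi_lin) : phi (bm (val y)) = 0.
Proof. by case: ap_ret => _ am_slin _; rewrite phi_bm kervalP (slin0 am_slin). Qed.

Definition ker_bp := to_ker psi_lin ker_bp_mem.
Definition ker_bm := to_ker phi_lin ker_bm_mem.

Lemma retractive_ker : retractive rho iota ker_bp ker_bm.
Proof.
case: bp_ret => [[bpD bpZ] [bmD bmZ] bmK].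
by split; [split=> [x y|r x] | split=> [x y|r x] | move=> y]; apply: val_inj;
  rewrite /= ?bpD ?bpZ ?bmD ?bmZ ?bmK.
Qed.

Lemma rp_map_kerval : rp_map ker_bp ker_bm bp bm val val.
Proof. by []. Qed.

End KernelPair.

Definition retractive_resolution (R S : pzRingType) (rho : R -> S) (iota : S -> R) n
    (M : lmodType R) (L : lmodType S) (ap : M -> L) (am : L -> M) : Prop :=
  exists (k l : nat -> nat)
         (bp : forall i, 'rV[R]_(k i) -> 'rV[S]_(l i))
         (bm : forall i, 'rV[S]_(l i) -> 'rV[R]_(k i))
         (p0 : 'rV[R]_(k 0%N) -> M) (q0 : 'rV[S]_(l 0%N) -> L)
         (p : forall i, 'rV[R]_(k i.+1) -> 'rV[R]_(k i))
         (q : forall i, 'rV[S]_(l i.+1) -> 'rV[S]_(l i)),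
    [/\ forall i, (i <= n)%N -> retractive rho iota (bp i) (bm i),
        rp_map (bp 0%N) (bm 0%N) ap am p0 q0
      & forall i, (i < n)%N ->
          rp_map (bp i.+1) (bm i.+1) (bp i) (bm i) (p i) (q i)]
    /\ [/\ surj p0 /\ surj q0,
        (0 < n)%N -> exact_at (p 0%N) p0 /\ exact_at (q 0%N) q0
      & forall i, (i.+1 < n)%N ->
          exact_at (p i.+1) (p i) /\ exact_at (q i.+1) (q i)].

Section Resolutions.
Variables (R S : pzRingType) (rho : R -> S) (iota : S -> R).

Lemma resolution_from_cover n (M : lmodType R) (L : lmodType S) (ap : M -> L) (am : L -> M)
    k0 l0 (bp0 : 'rV[R]_k0 -> 'rV[S]_l0) (bm0 : 'rV[S]_l0 -> 'rV[R]_k0)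
    (p0 : 'rV[R]_k0 -> M) (q0 : 'rV[S]_l0 -> L) (p0_lin : lin p0) (q0_lin : lin q0)
    (ap_ret : retractive rho iota ap am)
    (ap_p0 : forall x, ap (p0 x) = q0 (bp0 x)) (p0_bm0 : forall y, p0 (bm0 y) = am (q0 y)) :
  retractive rho iota bp0 bm0 -> surj p0 -> surj q0 ->
  ((0 < n)%N -> retractive_resolution rho iota n.-1
     (ker_bp q0_lin ap_ret ap_p0) (ker_bm p0_lin ap_ret p0_bm0)) ->
  retractive_resolution rho iota n ap am.
Proof.
move=> bp0_ret p0_surj q0_surj.
case: n => [_|n /(_ isT)].
  exists (fun=> k0), (fun=> l0), (fun=> bp0), (fun=> bm0), p0, q0.
  by exists (fun _ _ => 0), (fun _ _ => 0); split; split.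
move=> [k [l [bp [bm [p0' [q0' [p [q []]]]]]]]].
move=> [bp_ret bp_map0 bp_map] [[p0'_surj q0'_surj] ex0 exS].
pose kk : nat -> nat := dcons k0 k; pose ll : nat -> nat := dcons l0 l.
exists kk, ll, (@dcons (fun i => 'rV[R]_(kk i) -> 'rV[S]_(ll i)) bp0 bp).
exists (@dcons (fun i => 'rV[S]_(ll i) -> 'rV[R]_(kk i)) bm0 bm), p0, q0.
exists (@dcons (fun i => 'rV[R]_(kk i.+1) -> 'rV[R]_(kk i)) (fun x => val (p0' x)) p).
exists (@dcons (fun i => 'rV[S]_(ll i.+1) -> 'rV[S]_(ll i)) (fun y => val (q0' y)) q).
split; split=> //.
- by case=> [|i] lt_in; [exact: bp0_ret | exact: bp_ret].
- case=> [|i] lt_in /=; last exact: bp_map.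
  exact: rp_map_comp bp_map0 (rp_map_kerval _ _ _ _ _).
- by split; apply/exact_at_val.
- case=> [|i] lt_in /=; last exact: exS.
  by have [exp exq] := ex0 lt_in; split; apply/exact_at_valr.
Qed.

Lemma FP_of_retractive_resolution n (M : lmodType R) (L : lmodType S)
    (ap : M -> L) (am : L -> M) :
  retractive_resolution rho iota n ap am -> FP n L.
Proof.
move=> [k [l [bp [bm [p0 [q0 [p [q [[_ [_ q0_lin _ _] bp_map] [[_ q0_surj] ex0 exS]]]]]]]]]].
exists l, q0, q; split=> // [i lt_in|n_gt0|i lt_in].
- by case: (bp_map i lt_in).
- by case: (ex0 n_gt0).
- by case: (exS i lt_in).
Qed.

End Resolutions.

Section FreeCover.
Variables (R S : pzRingType) (rho : {rmorphism R -> S}) (iota : {rmorphism S -> R}).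
Hypothesis iotaK : cancel iota rho.
Variables (M : lmodType R) (L : lmodType S) (ap : M -> L) (am : L -> M).
Hypothesis ap_ret : retractive rho iota ap am.
Variables (k : nat) (e : 'rV[R]_k -> M) (e_lin : lin e) (e_surj : surj e).

Let m j := e 'e_j.

Definition cover_bp (z : 'rV[R]_(k + k)) : 'rV[S]_k := map_mx rho (lsubmx z).
Definition cover_bm (y : 'rV[S]_k) : 'rV[R]_(k + k) := row_mx (map_mx iota y) 0.
Definition cover_p :=
  copair (comb (fun j => am (ap (m j)))) (comb (fun j => m j - am (ap (m j)))).
Definition cover_q := comb (fun j => ap (m j)).

Lemma retractive_cover : retractive rho iota cover_bp cover_bm.
Proof.
split.
- split=> [x y|r x]; rewrite /cover_bp ?linearD ?linearZ /= ?map_mxD ?map_mxZ //.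
- split=> [x y|r x]; rewrite /cover_bm ?map_mxD ?map_mxZ;
    by rewrite ?add_row_mx ?scale_row_mx ?addr0 ?scaler0.
- by move=> y; rewrite /cover_bp /cover_bm row_mxKl; apply/matrixP => i j; rewrite !mxE iotaK.
Qed.

Lemma lin_cover_p : lin cover_p.
Proof. exact/lin_copair/lin_comb/lin_comb. Qed.

Lemma lin_cover_q : lin cover_q.
Proof. exact: lin_comb. Qed.

Lemma ap_cover_p z : ap (cover_p z) = cover_q (cover_bp z).
Proof.
case: ap_ret => ap_slin _ amK.
rewrite /cover_p /copair ap_slin.1 !(slin_comb _ _ ap_slin) [X in _ + X]big1 => [|j _].
  by rewrite addr0; apply: eq_bigr => j _; rewrite amK /cover_bp !mxE.
by rewrite (slinB ap_slin) amK subrr scaler0.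
Qed.

Lemma cover_p_bm y : cover_p (cover_bm y) = am (cover_q y).
Proof.
case: ap_ret => _ am_slin _.
rewrite /cover_p /cover_bm copair_row (slin0 (lin_comb _)) addr0 (slin_comb _ _ am_slin).
by apply: eq_bigr => j _; rewrite mxE.
Qed.

Lemma cover_p_surj : surj cover_p.
Proof.
move=> x; have [z <-] := e_surj x; exists (row_mx z z).
rewrite /cover_p copair_row (lin_combE e_lin) /comb -big_split.
by apply: eq_bigr => j _; rewrite /= -scalerDr addrC subrK.
Qed.

Lemma cover_q_surj : surj cover_q.
Proof.
case: ap_ret => ap_slin _ amK y; have [z ez] := e_surj (am y).
exists (map_mx rho z); rewrite -[y]amK -ez (lin_combE e_lin) (slin_comb _ _ ap_slin).
by apply: eq_bigr => j _; rewrite mxE.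
Qed.

End FreeCover.

Section FPResolution.
Variables (R S : pzRingType) (rho : {rmorphism R -> S}) (iota : {rmorphism S -> R}).
Hypothesis iotaK : cancel iota rho.

Lemma retractive_resolution_of_FP n (M : lmodType R) (L : lmodType S)
    (ap : M -> L) (am : L -> M) :
  retractive rho iota ap am -> FP n M -> retractive_resolution rho iota n ap am.
Proof.
elim: n => [|n IH] in M L ap am *; move=> ap_ret FPM;
  have [k [e [e_lin [e_surj _]]]] := (FP_kerP _ _).1 FPM;
  apply: (resolution_from_cover (p0_lin := lin_cover_p ap am e) (q0_lin := lin_cover_q ap e)
    (ap_p0 := ap_cover_p ap_ret e) (p0_bm0 := cover_p_bm ap_ret e) (retractive_cover iotaK k)
    (cover_p_surj ap am e_lin e_surj) (cover_q_surj ap_ret e_lin e_surj)) => // _.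
apply: IH; first exact/retractive_ker/retractive_cover.
exact: FP_ker_surj (cover_p_surj ap am e_lin e_surj) FPM.
Qed.

End FPResolution.

Unset Implicit Arguments.

Theorem proposition1 (R S : pzRingType)
    (rho : {rmorphism R -> S}) (iota : {rmorphism S -> R})
    (M : lmodType R) (L : lmodType S) (ap : M -> L) (am : L -> M) (n : nat) :
  cancel iota rho ->
  retractive rho iota ap am ->
  FP n M ->
  (exists (k l : nat -> nat)
          (bp : forall i, 'rV[R]_(k i) -> 'rV[S]_(l i))
          (bm : forall i, 'rV[S]_(l i) -> 'rV[R]_(k i))
          (p0 : 'rV[R]_(k 0%N) -> M) (q0 : 'rV[S]_(l 0%N) -> L)
          (p : forall i, 'rV[R]_(k i.+1) -> 'rV[R]_(k i))
          (q : forall i, 'rV[S]_(l i.+1) -> 'rV[S]_(l i)),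
     [/\ forall i, (i <= n)%N -> retractive rho iota (bp i) (bm i),
         rp_map (bp 0%N) (bm 0%N) ap am p0 q0
       & forall i, (i < n)%N ->
           rp_map (bp i.+1) (bm i.+1) (bp i) (bm i) (p i) (q i)]
     /\ [/\ surj p0 /\ surj q0,
         (0 < n)%N -> exact_at (p 0%N) p0 /\ exact_at (q 0%N) q0
       & forall i, (i.+1 < n)%N ->
           exact_at (p i.+1) (p i) /\ exact_at (q i.+1) (q i)])
  /\ FP n L.
Proof.
move=> iotaK ap_ret FPM.
have res := retractive_resolution_of_FP iotaK ap_ret FPM.
split; [exact: res | exact: FP_of_retractive_resolution res].
Qed.
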